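(* Let $T\ge1$ and $N \ge T + \lfloor T^2/4\rfloor + 2$. In the polytope-code decoding setting described in the context, the set $V^*$ satisfies $|V^*| \ge N - T - \lfloor T^2/4\rfloor - 1$, and $\bar y_i = y_i$ for every $v_i\in V^*$. That is, the decoder identifies at least $N - T - \lfloor T^2/4 \rfloor - 1$ packets as received correctly, and all packets so identified are indeed correct.
   Context: Let $N_0\ge1$. An eligible $(N,N-T)$-generator matrix is an $N\times(N-T)$ matrix $A=(A_{ij})$ with nonnegative integer entries whose first $N-T$ rows form the identity matrix and such that every $(N-T)\times(N-T)$ submatrix obtained by choosing $N-T$ rows is nonsingular. Given $x_1,\dots,x_{N-T}\in\mathbb{Z}^{N_0}$, the transmitted codewords are $y_i = \sum_{j=1}^{N-T} A_{ij} x_j$, $i\in[N]$. The decoder receives $\bar y_1,\dots,\bar y_N\in\mathbb{Z}^{N_0}$ with $\bar y_i = y_i$ for all $i$ outside some unknown set of at most $T$ indices, and knows exactly $F_{ij}=\langle y_i,y_j\rangle$ for all $i,j\in[N]$ (in the code, the inner products $\langle x_i,x_j\rangle$ are included in every packet and recovered by majority). The syndrome graph $G$ has vertices $v_1,\dots,v_N$; for $i\ne j$, $v_i$ and $v_j$ are adjacent iff $\langle\bar y_i,\bar y_j\rangle=F_{ij}$; $v_i$ has a self-loop iff $\langle\bar y_i,\bar y_i\rangle = F_{ii}$. $\hat G$ is $G$ with all vertices lacking a self-loop deleted. $V'$ is the set of vertices of $\hat G$ lying in a clique (pairwise adjacent distinct vertices) of size at least $N-T$ in $\hat G$. $V^*$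 is the set of $v_i\in V'$ adjacent in $\hat G$ to every vertex of $V'$ (including itself via its self-loop). *)

From HB Require Import structures.
From mathcomp Require Import all_boot all_order all_algebra.
Set Implicit Arguments. Unset Strict Implicit. Unset Printing Implicit Defensive.
Import Order.TTheory GRing.Theory Num.Theory.
Local Open Scope ring_scope.

Definition dotz (n0 : nat) (u v : 'rV[int]_n0) : int := \sum_(k < n0) u 0 k * v 0 k.

Definition eligible_generator (N T : nat) (A : 'M[int]_(N, N - T)) : Prop :=
  (forall i j, 0 <= A i j) /\
  (forall (i : 'I_N) (j : 'I_(N - T)), (i < N - T)%N -> A i j = (nat_of_ord i == nat_of_ord j)%:Z) /\
  (forall f : 'I_(N - T) -> 'I_N, injective f -> \det (rowsub f A) != 0).

(* Syndrome graph: for i <> j, adjacency; for i = j, self-loop.  Y = transmitted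
   codewords (rows), Yb = received codewords (rows). F_ij = <y_i, y_j>. *)
Definition synd_adj (N n0 : nat) (Y Yb : 'M[int]_(N, n0)) (i j : 'I_N) : bool :=
  dotz (row i Yb) (row j Yb) == dotz (row i Y) (row j Y).

(* Vertices of G-hat: those having a self-loop. *)
Definition has_loop (N n0 : nat) (Y Yb : 'M[int]_(N, n0)) (i : 'I_N) : bool :=
  synd_adj Y Yb i i.

Definition is_clique_hat (N n0 : nat) (Y Yb : 'M[int]_(N, n0)) (C : {set 'I_N}) : bool :=
  [forall i in C, has_loop Y Yb i] &&
  [forall i in C, forall j in C, (i != j) ==> synd_adj Y Yb i j].

Definition Vprime (N T n0 : nat) (Y Yb : 'M[int]_(N, n0)) : {set 'I_N} :=
  [set i | has_loop Y Yb i &&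
     [exists C : {set 'I_N}, [&& i \in C, is_clique_hat Y Yb C & (N - T <= #|C|)%N]]].

Definition Vstar (N T n0 : nat) (Y Yb : 'M[int]_(N, n0)) : {set 'I_N} :=
  [set i in Vprime T Y Yb | [forall j in Vprime T Y Yb, synd_adj Y Yb i j]].

From HB Require Import structures.
From mathcomp Require Import all_boot all_order all_algebra.
From mathcomp Require Import zify.
Import Order.TTheory GRing.Theory Num.Theory.

Set Implicit Arguments. Unset Strict Implicit. Unset Printing Implicit Defensive.

(* The correct packets form a clique of size at least N - T in G-hat, so they
   lie in V'.  Conversely, a vertex with a self-loop that is adjacent to N - T
   correct vertices is itself correct: its error is orthogonal to N - T rows of
   A X, hence (by the nonsingularity of the generator) to the row space of X, in
   particular to y_i, and the self-loop then forces the error to have norm 0.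
   Hence V* contains only correct vertices.

   For the count, every wrong vertex of V' misses at least
   a = #|correct| + 1 - (N - T) correct vertices, and a correct vertex missed by
   no wrong vertex of V' lies in V*.  The wrong vertices of a clique C of size
   at least N - T together miss only correct vertices outside C, at most
   a - 1 + #|C \ correct| of them.  Covering the wrong part of V' by such
   cliques, starting from one with the largest wrong part, bounds the number of
   missed correct vertices by a + T^2/4, via x y <= (x + y)^2 / 4. *)

Section Covering.
Variables (I : finType) (E : {set I}) (D S : I -> {set I}) (a M : nat).
Hypothesis card_D : {in E, forall e, a <= #|D e|}.
Hypothesis S_refl : {in E, forall e, e \in S e}.
Hypothesis S_sub : {in E, forall e, S e \subset E}.
Hypothesis card_bigcup_S : {in E, forall e, #|\bigcup_(x in S e) D x| + 1 <= a + #|S e|}.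
Hypothesis card_S : {in E, forall e, #|S e| <= M + 1}.
Hypothesis a_le_M : a <= M.

(* If [S e] is disjoint from [R], at most [a - 1 + #|S e| <= M * #|S e|] new
   points appear; if it meets [R] in some [e'], the new sets share [D e'] with
   the old union, so at most [#|S e| - 1 <= M] new points appear. *)
Lemma card_bigcup_setU_S (R : {set I}) e : R \subset E -> e \in E -> e \notin R ->
  #|\bigcup_(x in R :|: S e) D x| <= #|\bigcup_(x in R) D x| + M * #|S e :\: R|.
Proof.
move=> sRE eE eR; rewrite bigcup_setU.
have cardH := card_bigcup_S eE; have cardSe := card_S eE.
set UR := \bigcup_(x in R) D x; set H := \bigcup_(x in S e) D x in cardH *.
have cardUH := cardsUI UR H.
have [RSe0 | [e' e'RSe]] := set_0Vmem (S e :&: R).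
  rewrite -[#|S e :\: R|]add0n -(cards0 I) -RSe0 cardsID.
  have Se_gt0 : 0 < #|S e| by apply/card_gt0P; exists e; apply: S_refl.
  have : M + #|S e| <= M * #|S e| + 1 by move: Se_gt0 cardSe; clear; nia.
  lia.
have SeR_gt0 : 0 < #|S e :\: R|.
  by apply/card_gt0P; exists e; rewrite inE eR S_refl.
have /andP[e'S e'R] : (e' \in S e) && (e' \in R) by rewrite -in_setI.
have /subset_leq_card DUH : D e' \subset UR :&: H.
  by rewrite subsetI (bigcup_sup e' e'R) (bigcup_sup e' e'S).
have cardSeR := cardsID R (S e).
have := card_D (subsetP sRE _ e'R); nia.
Qed.

Lemma card_bigcup_cover (R : {set I}) : R \subset E ->
  #|\bigcup_(x in E) D x| <= #|\bigcup_(x in R) D x| + M * #|E :\: R|.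
Proof.
move=> sRE; have [n] := ubnP #|E :\: R|; elim: n R sRE => // n IH R sRE cardER.
have [sER | /subsetPn[e eE eR]] := boolP (E \subset R).
  by rewrite (eqP (_ : R == E)) ?leq_addr // eqEsubset sRE.
have sRSE : R :|: S e \subset E by rewrite subUset sRE S_sub.
have splitER : #|E :\: R| = #|S e :\: R| + #|E :\: (R :|: S e)|.
  rewrite -setDDl -(cardsID (S e) (E :\: R)); congr (_ + _).
  by rewrite setIC setIDA (setIidPl (S_sub eE)).
have ltER : #|E :\: (R :|: S e)| < n.
  have : 0 < #|S e :\: R| by apply/card_gt0P; exists e; rewrite inE eR S_refl.
  lia.
have := IH _ sRSE ltER; have := card_bigcup_setU_S sRE eE eR; nia.
Qed.

End Covering.

Lemma leq_mul_sqr_div4 x y T : x + y <= T -> x * y <= T ^ 2 %/ 4.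
Proof.
rewrite -leq_sqr leq_divRL // => /(leq_trans _); apply.
have amgm z t : z * (z + t) * 4 <= (z + (z + t)) ^ 2 by rewrite sqrnD; nia.
case: (leqP x y) => [/subnKC <- // | /ltnW /subnKC <-].
by rewrite [_ * y]mulnC [_ + y]addnC.
Qed.

Lemma leq_cover_sqr_div4 a s k T : 0 < a -> 0 < s <= k -> a + k <= T + 1 ->
  s + maxn a s.-1 * (k - s) <= T ^ 2 %/ 4 + 1.
Proof.
move=> a_gt0 /andP[s_gt0 s_le_k] akT.
case: (leqP s.-1 a) => [s_le_a | a_lt_s].
  have := @leq_mul_sqr_div4 a k.-1 T; nia.
have := @leq_mul_sqr_div4 s.-1 (k - s).+1 T; nia.
Qed.

Local Open Scope ring_scope.

Section InnerProduct.
Variable n0 : nat.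
Implicit Types u v d : 'rV[int]_n0.

Lemma dotzE u v : dotz u v = (u *m v^T) 0 0.
Proof. by rewrite /dotz !mxE; apply: eq_bigr => k _; rewrite !mxE. Qed.

Lemma dotzC u v : dotz u v = dotz v u.
Proof. by apply: eq_bigr => k _; rewrite mulrC. Qed.

Lemma dotzDl u v d : dotz (u + v) d = dotz u d + dotz v d.
Proof. by rewrite !dotzE mulmxDl mxE. Qed.

Lemma dotzDr u v d : dotz d (u + v) = dotz d u + dotz d v.
Proof. by rewrite ![dotz d _]dotzC dotzDl. Qed.

Lemma dotzBl u v d : dotz (u - v) d = dotz u d - dotz v d.
Proof. by rewrite !dotzE mulmxBl !mxE. Qed.

Lemma dotz0l u : dotz 0 u = 0.
Proof. by rewrite dotzE mul0mx mxE. Qed.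

Lemma dotzz_eq0 u : dotz u u = 0 -> u = 0.
Proof.
move=> uu0; apply/matrixP => r k; rewrite ord1 mxE.
have : u 0 k * u 0 k = 0.
  apply: (psumr_eq0P (P := xpredT) (F := fun k => u 0 k * u 0 k)) => //.
  by move=> l _; rewrite -expr2 sqr_ge0.
by move/eqP; rewrite mulf_eq0 orbb => /eqP.
Qed.

Lemma dotz_orth_addK u d : dotz d u = 0 -> dotz (u + d) (u + d) = dotz u u -> d = 0.
Proof.
move=> du0; rewrite dotzDl !dotzDr [dotz u d]dotzC du0 addr0 add0r.
by move/eqP; rewrite -subr_eq0 addrC addKr => /eqP /dotzz_eq0.
Qed.

End InnerProduct.

Lemma dotz_mulmx m n0 (u : 'rV[int]_n0) (w : 'rV[int]_m) (M : 'M[int]_(m, n0)) :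
  dotz u (w *m M) = dotz (u *m M^T) w.
Proof. by rewrite !dotzE trmx_mul mulmxA. Qed.

Lemma det_neq0_mulmx_tr_eq0 n (M : 'M[int]_n) (w : 'rV[int]_n) :
  \det M != 0 -> w *m M^T = 0 -> w = 0.
Proof.
move=> detM0 /(congr1 (mulmx^~ (\adj M^T))).
rewrite -mulmxA mul_mx_adj mul0mx mul_mx_scalar det_tr => /matrixP wM0.
apply/matrixP => r k; move: (wM0 r k); rewrite !mxE => /eqP.
by rewrite mulf_eq0 (negbTE detM0) => /eqP.
Qed.

Section Rigidity.
Variables (N T n0 : nat) (A : 'M[int]_(N, N - T)) (X : 'M[int]_(N - T, n0)).
Variable Yb : 'M[int]_(N, n0).
Hypothesis A_eligible : eligible_generator A.

Lemma orth_rows_eq0 (w : 'rV[int]_(N - T)) (W : {set 'I_N}) :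
  (N - T <= #|W|)%N -> {in W, forall j, dotz w (row j A) = 0} -> w = 0.
Proof.
move=> cardW orthW; have [_ [_ detA]] := A_eligible.
pose f (k : 'I_(N - T)) : 'I_N := enum_val (widen_ord cardW k).
have f_inj : injective f.
  by move=> k1 k2 /enum_val_inj /(congr1 val) /= eq_k; apply: val_inj.
apply: (det_neq0_mulmx_tr_eq0 (detA f f_inj)).
apply/matrixP => r k; rewrite ord1 [RHS]mxE -(orthW (f k) (enum_valP _)) dotzE !mxE.
by apply: eq_bigr => l _; rewrite !mxE.
Qed.

(* A loop at [i] says that the error [d] at [i] has [|y_i + d|^2 = |y_i|^2];
   adjacency to [N - T] correct vertices makes [d] orthogonal to the row space
   of [X], hence to [y_i], and then [|d|^2 = 0]. *)
Lemma correct_of_adj i (W : {set 'I_N}) :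
  has_loop (A *m X) Yb i -> (N - T <= #|W|)%N ->
  {in W, forall j, row j Yb = row j (A *m X)} ->
  {in W, forall j, synd_adj (A *m X) Yb i j} ->
  row i Yb = row i (A *m X).
Proof.
move=> loop_i cardW correctW adjW.
set Y := A *m X; set d := row i Yb - row i Y.
have d_orth_rowsA : {in W, forall j, dotz (d *m X^T) (row j A) = 0}.
  move=> j jW; move: (adjW j jW); rewrite /synd_adj (correctW j jW) => /eqP adj_ij.
  by rewrite -dotz_mulmx -row_mul /d dotzBl adj_ij subrr.
have dX0 : d *m X^T = 0 := orth_rows_eq0 cardW d_orth_rowsA.
have d_orth_i : dotz d (row i Y) = 0 by rewrite row_mul dotz_mulmx dX0 dotz0l.
have rowYb : row i Yb = row i Y + d by rewrite /d addrC subrK.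
move: loop_i; rewrite /has_loop /synd_adj -/Y rowYb => /eqP.
by move/(dotz_orth_addK d_orth_i) => ->; rewrite addr0.
Qed.

End Rigidity.

Local Close Scope ring_scope.

(* Cardinals elaborated from a statement over ['I_N] and those produced by
   library lemmas may differ by a [reverse_coercion] wrapper, which [lia]
   would otherwise treat as distinct atoms. *)
Ltac card_lia := cbv [reverse_coercion] in *; lia.

Section SyndromeGraph.
Variables (N T n0 : nat) (Y Yb : 'M[int]_(N, n0)).
Local Notation adj := (synd_adj Y Yb).
Local Notation V' := (Vprime T Y Yb).
Local Notation Vs := (Vstar T Y Yb).

Definition correct : {set 'I_N} := [set i | row i Yb == row i Y].

Definition nonadj_correct (e : 'I_N) : {set 'I_N} := correct :\: [set g | adj e g].

Definition witness_clique (e : 'I_N) : {set 'I_N} :=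
  odflt set0 [pick C : {set 'I_N} | [&& e \in C, is_clique_hat Y Yb C & N - T <= #|C|]].

Lemma synd_adjC i j : adj i j = adj j i.
Proof. by rewrite /synd_adj dotzC [dotz (row i Y) _]dotzC. Qed.

Lemma synd_adj_correct i j : i \in correct -> j \in correct -> adj i j.
Proof. by rewrite !inE /synd_adj => /eqP-> /eqP->. Qed.

Lemma clique_loop C x : is_clique_hat Y Yb C -> x \in C -> has_loop Y Yb x.
Proof. by case/andP=> /forall_inP loopC _; apply: loopC. Qed.

Lemma clique_adj C x y : is_clique_hat Y Yb C -> x \in C -> y \in C -> x != y -> adj x y.
Proof.
case/andP=> _ /forall_inP adjC xC yC.
by move: (adjC x xC) => /forall_inP /(_ y yC) /implyP.
Qed.

Lemma clique_sub_Vprime C : is_clique_hat Y Yb C -> N - T <= #|C| -> C \subset V'.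
Proof.
move=> cliqueC cardC; apply/subsetP => x xC; rewrite inE (clique_loop cliqueC xC).
by apply/existsP; exists C; rewrite xC cliqueC cardC.
Qed.

Lemma witness_cliqueP e : e \in V' ->
  [/\ e \in witness_clique e, is_clique_hat Y Yb (witness_clique e)
    & N - T <= #|witness_clique e|].
Proof.
rewrite inE => /andP[_ /existsP[C0 C0P]]; rewrite /witness_clique.
by case: pickP => [C /and3P[] | /(_ C0)]; [split | rewrite C0P].
Qed.

Lemma bigcup_nonadj_clique C : is_clique_hat Y Yb C ->
  \bigcup_(x in C :\: correct) nonadj_correct x \subset correct :\: C.
Proof.
move=> cliqueC; apply/bigcupsP => x /setDP[xC xNc]; apply/subsetP => g.
rewrite !inE => /andP[nadj gc]; rewrite gc andbT; apply: contra nadj => gC.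
apply: (clique_adj cliqueC xC gC).
by apply: contraNneq xNc => ->; rewrite inE.
Qed.

Lemma correct_nonadj_sub_Vstar : correct \subset V' ->
  correct :\: \bigcup_(e in V' :\: correct) nonadj_correct e \subset Vs.
Proof.
move=> cV'; apply/subsetP => g /setDP[gc gU]; rewrite inE (subsetP cV' g gc) /=.
apply/forall_inP => j jV'; have [jc | jNc] := boolP (j \in correct).
  exact: synd_adj_correct.
rewrite synd_adjC; apply: contraR gU => nadj; apply/bigcupP; exists j.
  by rewrite inE jNc.
by rewrite /nonadj_correct in_setD gc andbT inE nadj.
Qed.

Definition loop_rigid : Prop := forall i (W : {set 'I_N}), has_loop Y Yb i ->
  N - T <= #|W| -> W \subset correct -> {in W, forall j, adj i j} -> i \in correct.

Hypothesis many_correct : N - T <= #|correct|.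
Hypothesis rigid : loop_rigid.

Lemma correct_clique : is_clique_hat Y Yb correct.
Proof.
apply/andP; split; apply/forall_inP => x xc; first exact: synd_adj_correct.
by apply/forall_inP => y yc; apply/implyP => _; apply: synd_adj_correct.
Qed.

Lemma Vstar_sub_correct : Vs \subset correct.
Proof.
apply/subsetP => i; rewrite inE => /andP[iV' /forall_inP adj_i].
move: iV'; rewrite inE => /andP[loop_i _].
apply: (rigid loop_i many_correct) => // j jc.
by apply: adj_i; rewrite (subsetP (clique_sub_Vprime correct_clique many_correct)).
Qed.

Local Notation excess := (#|correct| + 1 - (N - T)).

Lemma card_nonadj_correct e : e \in V' :\: correct -> excess <= #|nonadj_correct e|.
Proof.
case/setDP; rewrite inE => /andP[loop_e _] eNc.
have cardW : #|correct :&: [set g | adj e g]| < N - T.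
  rewrite ltnNge; apply: contra eNc => cardW.
  by apply: (rigid loop_e cardW (subsetIl _ _)) => j; rewrite !inE => /andP[].
by rewrite /nonadj_correct -(cardsID [set g | adj e g] correct); card_lia.
Qed.

Lemma card_bigcup_nonadj_witness e : e \in V' ->
  #|\bigcup_(x in witness_clique e :\: correct) nonadj_correct x| + 1
    <= excess + #|witness_clique e :\: correct|.
Proof.
case/witness_cliqueP=> _ cliqueC cardC.
have /subset_leq_card := bigcup_nonadj_clique cliqueC.
have := cardsID correct (witness_clique e); have := cardsID (witness_clique e) correct.
rewrite setIC; card_lia.
Qed.

Lemma card_bigcup_nonadj :
  #|\bigcup_(e in V' :\: correct) nonadj_correct e| <= excess + T ^ 2 %/ 4.
Proof.
set E := V' :\: correct; pose S e := witness_clique e :\: correct.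
have [-> | [e1 e1E]] := set_0Vmem E; first by rewrite big_set0 cards0.
have S_refl : {in E, forall e, e \in S e}.
  by move=> e /setDP[eV' eNc]; case/witness_cliqueP: eV'; rewrite inE eNc.
have S_sub : {in E, forall e, S e \subset E}.
  move=> e /setDP[eV' _]; case/witness_cliqueP: (eV') => _ cliqueC cardC.
  exact: setSD (clique_sub_Vprime cliqueC cardC).
have [e0 e0E S_max] := @arg_maxnP _ e1 (mem E) (fun e => #|S e|) e1E.
set s := #|S e0|; pose M := maxn excess s.-1.
have card_S : {in E, forall e, #|S e| <= M + 1}.
  by move=> e /S_max le_e; have := leq_maxr excess s.-1; lia.
have := @card_bigcup_cover _ E nonadj_correct S excess M card_nonadj_correct S_refl
  S_sub (fun e eE => card_bigcup_nonadj_witness (subsetP (subsetDl _ _) e eE))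
  card_S (leq_maxl _ _) _ (S_sub e0 e0E).
have := card_bigcup_nonadj_witness (subsetP (subsetDl _ _) e0 e0E).
rewrite [#|E :\: _|]cardsD (setIidPr (S_sub e0 e0E)) -/s.
have s_gt0 : 0 < s by apply/card_gt0P; exists e0; apply: S_refl.
have /subset_leq_card s_le_E := S_sub e0 e0E.
have /subset_leq_card : E \subset ~: correct.
  by apply/subsetP => x /setDP[_ xNc]; rewrite in_setC.
rewrite [#|~: _|]cardsCs setCK card_ord.
rewrite -/(S e0) -/s => E_le cardH cover.
have := @leq_cover_sqr_div4 excess s #|E| T; rewrite -/M.
have := max_card (mem correct); rewrite card_ord.
card_lia.
Qed.

Lemma card_Vstar_ge : N - T - T ^ 2 %/ 4 - 1 <= #|Vs|.
Proof.
have /subset_leq_card :=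
  correct_nonadj_sub_Vstar (clique_sub_Vprime correct_clique many_correct).
set U := \bigcup_(e in V' :\: correct) nonadj_correct e.
have := card_bigcup_nonadj; rewrite -/U cardsD.
have /subset_leq_card := subsetIr correct U; card_lia.
Qed.

End SyndromeGraph.

Theorem theorem2 (N T N0 : nat) (hN0 : (1 <= N0)%N) (hT : (1 <= T)%N)
  (hN : (T + T ^ 2 %/ 4 + 2 <= N)%N)
  (A : 'M[int]_(N, N - T)) (hA : eligible_generator A)
  (X : 'M[int]_(N - T, N0)) (Yb : 'M[int]_(N, N0)) (B : {set 'I_N})
  (hB : (#|B| <= T)%N)
  (hYb : forall i : 'I_N, i \notin B -> row i Yb = row i (A *m X)) :
  (N - T - T ^ 2 %/ 4 - 1 <= #|Vstar T (A *m X) Yb|)%N /\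
  (forall i : 'I_N, i \in Vstar T (A *m X) Yb -> row i Yb = row i (A *m X)).
Proof.
have many_correct : N - T <= #|correct (A *m X) Yb|.
  have /subset_leq_card : ~: correct (A *m X) Yb \subset B.
    by apply/subsetP => i; rewrite in_setC inE; apply: contraR => /hYb ->.
  by rewrite [#|~: _|]cardsCs setCK card_ord; card_lia.
have rigid : loop_rigid T (A *m X) Yb.
  move=> i W loop_i cardW /subsetP Wc adjW; rewrite inE; apply/eqP.
  by apply: (correct_of_adj hA loop_i cardW _ adjW) => j /Wc; rewrite inE => /eqP.
split; first exact: card_Vstar_ge.
by move=> i /(subsetP (Vstar_sub_correct many_correct rigid)); rewrite inE => /eqP.
Qed.
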